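(* Let $r\ge 2$, $t\ge 1$, and let $\mathcal F\subset 2^{[n]}$ be a non-trivial $r$-wise $t$-agreeing family. For $j\in[n]$ let $\mathcal F_j=\{F\setminus\{j\}: F\in\mathcal F\}$, regarded as a subfamily of $2^{[n]\setminus\{j\}}$ (with ground set $[n]\setminus\{j\}$). If $t\ge 2$ then $\mathcal F_j$ is non-trivial $r$-wise $(t-1)$-agreeing. If $t=1$ then $\mathcal F_j$ is non-trivial $(r-1)$-wise agreeing (i.e. $(r-1)$-wise $1$-agreeing).
   Context: For a ground set $X$ and a family $\mathcal F\subset 2^X$: sets $F_1,\ldots,F_r\subset X$ agree on a coordinate $x\in X$ if either $x\in\bigcap_{i}F_i$ or $x\notin\bigcup_i F_i$. $\mathcal F$ is $r$-wise $t$-agreeing if any $r$ sets from $\mathcal F$ (not necessarily distinct) agree on at least $t$ coordinates of $X$; $r$-wise agreeing means $r$-wise $1$-agreeing. $\mathcal F$ is non-trivial if $\bigcap_{A\in\mathcal F}A=\emptyset$ and $\bigcup_{A\in\mathcal F}A=X$. Here $X=[n]$ for $\mathcal F$ and $X=[n]\setminus\{j\}$ for $\mathcal F_j$. *)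

From mathcomp Require Import all_boot.
Set Implicit Arguments. Unset Strict Implicit. Unset Printing Implicit Defensive.

Definition agree_on (T : finType) (r : nat) (f : 'I_r -> {set T}) (x : T) : bool :=
  [forall i, x \in f i] || [forall i, x \notin f i].

(* F is r-wise t-agreeing with ground set X: any r sets of F (not necessarily
   distinct) agree on at least t coordinates of X. *)
Definition rwise_agreeing (T : finType) (X : {set T}) (F : {set {set T}})
    (r t : nat) : Prop :=
  forall f : 'I_r -> {set T}, (forall i, f i \in F) ->
    t <= #|[set x in X | agree_on f x]|.

Definition nontrivial (T : finType) (X : {set T}) (F : {set {set T}}) : Prop :=
  X :&: (\bigcap_(A in F) A) = set0 /\ \bigcup_(A in F) A = X.

Definition deleted (n : nat) (F : {set {set 'I_n}}) (j : 'I_n) : {set {set 'I_n}} :=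
  [set A :\ j | A in F].

From mathcomp Require Import all_boot.
Set Implicit Arguments. Unset Strict Implicit.

(* Deleting j from every set changes no agreement away from j, so the
   agreement set only loses j, and t-agreement drops to (t-1)-agreement.
   For t = 1 the single agreed coordinate may be j itself; to rule this out,
   pad r - 1 given sets with one more member of F that disagrees with the
   first of them at j (non-triviality provides it): the r sets still agree
   somewhere, necessarily off j. *)

Section Agreement.

Variables (T : finType) (r : nat).

Lemma agree_on_mem (f : 'I_r -> {set T}) (x : T) (i k : 'I_r) :
  agree_on f x -> (x \in f i) = (x \in f k).
Proof.
by case/orP=> /forallP all_f; [rewrite !all_f | rewrite !(negbTE (all_f _))].
Qed.

Lemma agree_on_reindex (m : nat) (f : 'I_r -> {set T}) (g : 'I_m -> {set T})
    (s : 'I_m -> 'I_r) (x : T) :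
  (forall i, g i = f (s i)) -> agree_on f x -> agree_on g x.
Proof.
by move=> gfs /orP[] /forallP all_f; apply/orP; [left|right]; apply/forallP=> i;
  rewrite gfs.
Qed.

Lemma agree_on_setD1 (f g : 'I_r -> {set T}) (j x : T) :
  x != j -> (forall i, f i = g i :\ j) -> agree_on f x = agree_on g x.
Proof.
move=> xj fg; rewrite /agree_on.
by congr (_ || _); apply: eq_forallb => i; rewrite fg in_setD1 xj.
Qed.

End Agreement.

Lemma nontrivial_mem_switch (T : finType) (X : {set T}) (F : {set {set T}}) (j : T) :
  nontrivial X F -> j \in X -> forall b : bool, exists2 A, A \in F & (j \in A) = b.
Proof.
move=> [capF cupF] jX [|].
  have : j \in \bigcup_(A in F) A by rewrite cupF.
  by case/bigcupP=> A AF jA; exists A.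
have : j \notin X :&: \bigcap_(A in F) A by rewrite capF inE.
rewrite inE jX /= => j_notin_cap.
have /exists_inP[A AF /negbTE jA] : [exists A in F, j \notin A].
  apply: contraR j_notin_cap => /exists_inPn all_j.
  by apply/bigcapP=> A /all_j; rewrite negbK.
by exists A.
Qed.

Section Deletion.

Variables (n : nat) (X : {set 'I_n}) (F : {set {set 'I_n}}) (j : 'I_n).

Lemma deleted_preimage (r : nat) (f : 'I_r -> {set 'I_n}) :
  (forall i, f i \in deleted F j) ->
  exists2 g : 'I_r -> {set 'I_n}, (forall i, g i \in F) & forall i, f i = g i :\ j.
Proof.
move=> fF; have /fin_all_exists[g gP] : forall i, exists A, (A \in F) && (f i == A :\ j).
  by move=> i; case/imsetP: (fF i) => A AF ->; exists A; rewrite AF eqxx.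
by exists g => i; case/andP: (gP i) => // _ /eqP.
Qed.

Lemma nontrivial_deleted : nontrivial X F -> nontrivial (X :\ j) (deleted F j).
Proof.
move=> [capF cupF]; split.
  apply/eqP; rewrite -subset0 -capF; apply/subsetP=> x.
  rewrite !inE => /andP[/andP[_ xX] /bigcapP capx]; rewrite xX /=.
  by apply/bigcapP=> A AF; have := capx _ (imset_f _ AF); rewrite inE => /andP[].
rewrite -cupF; apply/setP=> x; rewrite inE; apply/bigcupP/andP.
  case=> _ /imsetP[A AF ->]; rewrite inE => /andP[xj xA].
  by split=> //; apply/bigcupP; exists A.
by case=> xj /bigcupP[A AF xA]; exists (A :\ j); [apply: imset_f | rewrite inE xj].
Qed.

Lemma rwise_agreeing_deleted (r t : nat) :
  rwise_agreeing X F r t -> rwise_agreeing (X :\ j) (deleted F j) r t.-1.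
Proof.
move=> agF f fF; have [g gF fg] := deleted_preimage fF.
have -> : [set x in X :\ j | agree_on f x] = [set x in X | agree_on g x] :\ j.
  apply/setP=> x; rewrite !inE; case: (eqVneq x j) => //= xj.
  by rewrite (agree_on_setD1 xj fg).
rewrite -subn1 leq_subLR (leq_trans (agF g gF)) // (cardsD1 j) leq_add2r.
exact: leq_b1.
Qed.

Lemma rwise_agreeing1_deleted (r : nat) :
  0 < r -> j \in X -> nontrivial X F ->
  rwise_agreeing X F r.+1 1 -> rwise_agreeing (X :\ j) (deleted F j) r 1.
Proof.
move=> r_gt0 jX ntF agF f fF; have [g gF fg] := deleted_preimage fF.
pose g0 := g (Ordinal r_gt0).
have [e eF je] := nontrivial_mem_switch ntF jX (j \notin g0).
pose h (i : 'I_r.+1) := if unlift ord_max i is Some k then g k else e.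
have hF i : h i \in F by rewrite /h; case: unlift.
have h_lift k : g k = h (lift ord_max k) by rewrite /h liftK.
have h_max : h ord_max = e by rewrite /h unlift_none.
have /card_gt0P[x] := agF h hF; rewrite inE => /andP[xX agx].
have xj : x != j.
  apply/eqP=> xE; have := agree_on_mem (lift ord_max (Ordinal r_gt0)) ord_max agx.
  by rewrite xE -h_lift h_max je; case: (j \in g0).
apply/card_gt0P; exists x; rewrite !inE xj xX (agree_on_setD1 xj fg).
exact: agree_on_reindex h_lift agx.
Qed.

End Deletion.

Theorem lemma2 (n r t : nat) (F : {set {set 'I_n}}) (j : 'I_n) :
  2 <= r -> 1 <= t ->
  rwise_agreeing [set: 'I_n] F r t ->
  nontrivial [set: 'I_n] F ->
  (2 <= t ->
     nontrivial ([set: 'I_n] :\ j) (deleted F j) /\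
     rwise_agreeing ([set: 'I_n] :\ j) (deleted F j) r t.-1) /\
  (t = 1 ->
     nontrivial ([set: 'I_n] :\ j) (deleted F j) /\
     rwise_agreeing ([set: 'I_n] :\ j) (deleted F j) r.-1 1).
Proof.
move=> r_ge2 _ agF ntF; have ntFj := nontrivial_deleted j ntF.
split=> [_ | t1]; split=> //; first exact: rwise_agreeing_deleted.
case: r r_ge2 agF => [|r] // r_gt0; rewrite t1 /= => agF.
by apply: rwise_agreeing1_deleted; rewrite ?inE.
Qed.
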